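(* For any real $\lambda$ and any $0<y<\pi/2$, \[ \left(\lambda\int_0^y \frac{\cos \lambda t}{\cos t}\,dt\right)^2+ \left(\lambda\int_0^y \frac{\sin \lambda t}{\cos t}\,dt-1\right)^2<\frac{1}{\cos^2 y}. \] *)

From Stdlib Require Import Reals.
From Coquelicot Require Import Coquelicot.

(* Write w = t + i r and f(w) = e^{iλw} / cos w, which is holomorphic on the strip |t| < π/2.
   The left-hand side is |λ ∫_0^y f(t) dt - i|^2, so it suffices to bound every projection
   c Re + s Im with c^2 + s^2 = 1 by 1/cos y.  For λ >= 0, Cauchy's theorem replaces [0, y] by the
   other three sides of the rectangle [0, y] x [0, h].  On the top side |f| <= e^{-λh} / sinh h.
   Writing -i = -i λ ∫_0^h e^{-λr} dr - i e^{-λh}, the vertical sides contribute at most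
   (1 - e^{-λh}) / cos y, because |1 / cos (y + i r)| <= 1/cos y - 1 + 1/cosh r while f(i r) is
   e^{-λr} / cosh r.  So the projection is at most
   (1 - e^{-λh}) / cos y + e^{-λh} + λ y e^{-λh} / sinh h, which is less than 1/cos y as soon as
   sinh h > λ y / (1/cos y - 1).  The case λ < 0 reduces to -λ. *)

From Stdlib Require Import Reals Lra.
From Coquelicot Require Import Coquelicot.
Open Scope R_scope.

Lemma cosh_pos x : 0 < cosh x.
Proof. unfold cosh; generalize (exp_pos x) (exp_pos (- x)); lra. Qed.

Lemma cosh_sqr x : cosh x ^ 2 = 1 + sinh x ^ 2.
Proof.
  unfold cosh, sinh; rewrite exp_Ropp.
  field; apply Rgt_not_eq, exp_pos.
Qed.

Lemma cosh_ge_1 x : 1 <= cosh x.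
Proof. generalize (cosh_sqr x) (cosh_pos x); nra. Qed.

Lemma exists_sinh_gt K : exists x, 0 < x /\ K < sinh x.
Proof.
  set (M := 2 * Rmax K 0 + 2).
  assert (HM : 2 <= M) by (unfold M; generalize (Rmax_r K 0); lra).
  exists (ln M); split.
  - rewrite <- ln_1; apply ln_increasing; lra.
  - unfold sinh; rewrite exp_Ropp, exp_ln by lra.
    assert (/ M <= / 2) by (apply Rinv_le_contravar; lra).
    assert (2 * K + 2 <= M) by (unfold M; generalize (Rmax_l K 0); lra).
    lra.
Qed.

Lemma unit_dot_le_Cmod c s (z : C) : c ^ 2 + s ^ 2 = 1 -> c * Re z + s * Im z <= Cmod z.
Proof.
  intro Hcs.
  assert (Lagrange : (c * Re z + s * Im z) ^ 2 + (c * Im z - s * Re z) ^ 2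
                     = (c ^ 2 + s ^ 2) * Cmod z ^ 2) by (rewrite Cmod2_alt; ring).
  rewrite Hcs in Lagrange.
  generalize (pow2_ge_0 (c * Im z - s * Re z)) (Cmod_ge_0 z); intros.
  destruct (Rle_or_lt (c * Re z + s * Im z) (Cmod z)); nra.
Qed.

Lemma sum_sqr_lt_of_unit_dot_lt X Y M :
  0 < M -> (forall c s, c ^ 2 + s ^ 2 = 1 -> c * X + s * Y < M) -> X ^ 2 + Y ^ 2 < M ^ 2.
Proof.
  intros HM Hdot.
  set (N := sqrt (X ^ 2 + Y ^ 2)).
  assert (HN : N ^ 2 = X ^ 2 + Y ^ 2) by (unfold N; rewrite pow2_sqrt; nra).
  destruct (Req_dec N 0) as [N0 | N0].
  - rewrite <- HN, N0; nra.
  - assert (N_pos : 0 < N) by (generalize (sqrt_pos (X ^ 2 + Y ^ 2)); fold N; lra).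
    assert (HNM : N < M).
    { replace N with (X / N * X + Y / N * Y) by (field_simplify_eq; auto; lra).
      apply Hdot; field_simplify_eq; auto; lra. }
    rewrite <- HN; nra.
Qed.

(* The bound on |1 / cos (y + i r)|, with co = cos y, ch = cosh r and m = |cos (y + i r)|. *)
Lemma inv_le_inv_sub_1_add_inv (co ch m : R) :
  0 < co <= 1 -> 1 <= ch -> 0 < m -> m ^ 2 = co ^ 2 + ch ^ 2 - 1 -> / m <= / co - 1 + / ch.
Proof.
  intros Hco Hch Hm Hm2.
  set (u := ch - co * ch + co).
  assert (Hu : 1 <= u) by (unfold u; nra).
  assert (Hsq : (co * ch) ^ 2 <= (u * m) ^ 2).
  { assert (Hdiff : (u * m) ^ 2 - (co * ch) ^ 2 = (ch - 1) * (u ^ 2 * (ch + 1) - co ^ 3 * (u + ch)))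
      by (rewrite Rpow_mult_distr, Hm2; unfold u; ring).
    assert (co ^ 3 <= 1) by (rewrite <- (pow1 3); apply pow_incr; lra).
    assert (u + ch <= u ^ 2 * (ch + 1)).
    { assert (u ^ 2 * (ch + 1) - (u + ch) = u * (u - 1) * (ch + 1) + (u - 1) * ch) by ring.
      assert (0 <= u * (u - 1) * (ch + 1)) by (apply Rmult_le_pos; nra).
      nra. }
    assert (0 <= (ch - 1) * (u ^ 2 * (ch + 1) - co ^ 3 * (u + ch))) by (apply Rmult_le_pos; nra).
    lra. }
  assert (Hle : co * ch <= u * m)
    by (apply Rsqr_incr_0_var; [rewrite !Rsqr_pow2; exact Hsq | nra]).
  assert (E : / co - 1 + / ch - / m = (u * m - co * ch) / (co * ch * m)) by (unfold u; field; lra).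
  assert (0 <= (u * m - co * ch) / (co * ch * m)) by (apply Rle_mult_inv_pos;
    [lra | repeat apply Rmult_lt_0_compat; lra]).
  lra.
Qed.

Lemma continuity_2d_pt_pow (f : R -> R -> R) (n : nat) (x y : R) :
  continuity_2d_pt f x y -> continuity_2d_pt (fun u v => f u v ^ n) x y.
Proof.
  intro Hf; induction n as [|n IH]; simpl.
  - apply continuity_2d_pt_const.
  - now apply continuity_2d_pt_mult.
Qed.

Lemma continuity_2d_pt_comp_derivable (f : R -> R) (g : R -> R -> R) (x y : R) :
  (forall z, ex_derive f z) -> continuity_2d_pt g x y ->
  continuity_2d_pt (fun u v => f (g u v)) x y.
Proof.
  intros Hf Hg; apply continuity_1d_2d_pt_comp; [|exact Hg].
  apply continuity_pt_filterlim, (ex_derive_continuous (V := R_NormedModule)), Hf.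
Qed.

Ltac continuity_2d :=
  unfold Rdiv;
  repeat first
    [ apply continuity_2d_pt_const | apply continuity_2d_pt_id1 | apply continuity_2d_pt_id2
    | apply continuity_2d_pt_plus | apply continuity_2d_pt_minus | apply continuity_2d_pt_mult
    | apply continuity_2d_pt_opp | apply continuity_2d_pt_pow | apply continuity_2d_pt_inv
    | apply continuity_2d_pt_comp_derivable; [intro; auto_derive; trivial |] ].

Lemma continuity_2d_pt_continuous_snd (f : R -> R -> R) (x y : R) :
  continuity_2d_pt f x y -> continuous (f x) y.
Proof.
  intro Hf.
  apply (continuous_comp_2 (fun _ => x) (fun v => v) f).
  - apply continuous_const.
  - apply continuous_id.
  - now apply continuity_2d_pt_filterlim.
Qed.

Lemma is_derive_continuous (f : R -> R) (x l : R) : is_derive f x l -> continuous f x.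
Proof. intro Hf; apply (ex_derive_continuous (V := R_NormedModule)); now exists l. Qed.

Lemma locally_2d_strip (lo hi r t : R) (P : R -> R -> Prop) :
  lo < t < hi -> (forall u v, lo < v < hi -> P u v) -> locally_2d P r t.
Proof.
  intros Ht HP.
  assert (Hd : 0 < Rmin (t - lo) (hi - t)) by (apply Rmin_glb_lt; lra).
  exists (mkposreal _ Hd); intros u v _ Hv; simpl in Hv.
  apply HP; apply Rabs_def2 in Hv.
  generalize (Rmin_l (t - lo) (hi - t)) (Rmin_r (t - lo) (hi - t)); lra.
Qed.

Lemma segment_in_strip (lo hi a b t : R) :
  lo < a < hi -> lo < b < hi -> Rmin a b <= t <= Rmax a b -> lo < t < hi.
Proof.
  intros Ha Hb Ht.
  assert (lo < Rmin a b) by (apply Rmin_glb_lt; lra).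
  assert (Rmax a b < hi) by (apply Rmax_lub_lt; lra).
  lra.
Qed.

Lemma is_derive_RInt_strip (lo hi a b r : R) (p q u : R -> R -> R) :
  lo < a < hi -> lo < b < hi ->
  (forall r t, lo < t < hi ->
     ex_derive (fun t => p r t) t /\ is_derive (fun r => p r t) r (u r t) /\
     is_derive (fun t => q r t) t (- u r t) /\ continuity_2d_pt u r t) ->
  is_derive (fun r => RInt (fun t => p r t) a b) r (q r a - q r b).
Proof.
  intros Ha Hb H.
  pose proof (segment_in_strip lo hi a b) as Hab.
  assert (Hint : is_RInt (fun t => Derive (fun r => p r t) r) a b (q r a - q r b)).
  { replace (q r a - q r b) with (- (q r b - q r a)) by ring.
    apply (is_RInt_ext (fun t => - - u r t)).
    - intros t Ht; rewrite Ropp_involutive; symmetry.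
      apply is_derive_unique, (H r t); apply Hab; auto; lra.
    - apply (is_RInt_opp (fun t => - u r t)), (is_RInt_derive (fun t => q r t));
        intros t Ht; destruct (H r t (Hab t Ha Hb Ht)) as (_ & _ & Hq & Hu).
      + exact Hq.
      + apply (continuity_2d_pt_continuous_snd (fun r t => - u r t)), continuity_2d_pt_opp, Hu. }
  rewrite <- (is_RInt_unique _ _ _ _ Hint).
  apply is_derive_RInt_param.
  - apply filter_forall; intros r' t Ht; exists (u r' t); apply (H r' t (Hab t Ha Hb Ht)).
  - intros t Ht.
    apply (continuity_2d_pt_ext_loc u).
    + apply (locally_2d_strip lo hi); [now apply Hab |]; intros u' v Hv.
      symmetry; apply is_derive_unique, (H u' v Hv).
    + apply (H r t (Hab t Ha Hb Ht)).
  - apply filter_forall; intro r'; apply (ex_RInt_continuous (V := R_CompleteNormedModule)).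
    intros t Ht; destruct (H r' t (Hab t Ha Hb Ht)) as [[l Hl] _].
    now apply (is_derive_continuous _ _ l).
Qed.

(** * Cauchy's theorem on a rectangle *)

(* [F r t] is the value at w = t + i r of a function whose complex derivative is [F']:
   d/dt F = F' and d/dr F = i F'. *)
Definition cauchy_riemann_at (F F' : R -> R -> C) (r t : R) : Prop :=
  is_derive (fun t => Re (F r t)) t (Re (F' r t)) /\
  is_derive (fun t => Im (F r t)) t (Im (F' r t)) /\
  is_derive (fun r => Re (F r t)) r (- Im (F' r t)) /\
  is_derive (fun r => Im (F r t)) r (Re (F' r t)).

(* Differentiating the integral over the horizontal segment at height r gives Cauchy's
   theorem for the rectangle [a, b] x [r0, r1]. *)
Section CauchyRectangle.

Variables (lo hi : R) (F F' : R -> R -> C).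

Hypothesis F_cauchy_riemann : forall r t, lo < t < hi -> cauchy_riemann_at F F' r t.
Hypothesis F'_continuous : forall r t, lo < t < hi ->
  continuity_2d_pt (fun r t => Re (F' r t)) r t /\ continuity_2d_pt (fun r t => Im (F' r t)) r t.

Variables (a b : R).
Hypotheses (Ha : lo < a < hi) (Hb : lo < b < hi).

Lemma continuous_Re_strip r t : lo < t < hi -> continuous (fun r => Re (F r t)) r.
Proof.
  intro Ht; destruct (F_cauchy_riemann r t Ht) as (_ & _ & HRe & _).
  exact (is_derive_continuous _ _ _ HRe).
Qed.

Lemma continuous_Im_strip r t : lo < t < hi -> continuous (fun r => Im (F r t)) r.
Proof.
  intro Ht; destruct (F_cauchy_riemann r t Ht) as (_ & _ & _ & HIm).
  exact (is_derive_continuous _ _ _ HIm).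
Qed.

Lemma ex_RInt_Re_strip r : ex_RInt (fun t => Re (F r t)) a b.
Proof.
  apply (ex_RInt_continuous (V := R_CompleteNormedModule)); intros t Ht.
  destruct (F_cauchy_riemann r t (segment_in_strip lo hi a b t Ha Hb Ht)) as (HRe & _).
  exact (is_derive_continuous _ _ _ HRe).
Qed.

Lemma ex_RInt_Im_strip r : ex_RInt (fun t => Im (F r t)) a b.
Proof.
  apply (ex_RInt_continuous (V := R_CompleteNormedModule)); intros t Ht.
  destruct (F_cauchy_riemann r t (segment_in_strip lo hi a b t Ha Hb Ht)) as (_ & HIm & _).
  exact (is_derive_continuous _ _ _ HIm).
Qed.

Lemma is_RInt_Re_rectangle r0 r1 :
  is_RInt (fun r => Im (F r a) - Im (F r b)) r0 r1
    (RInt (fun t => Re (F r1 t)) a b - RInt (fun t => Re (F r0 t)) a b).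
Proof.
  apply (is_RInt_derive (fun r => RInt (fun t => Re (F r t)) a b)); intros r _.
  - apply (is_derive_RInt_strip lo hi a b r _ (fun r t => Im (F r t)) (fun r t => - Im (F' r t)));
      auto; intros r' t Ht.
    destruct (F_cauchy_riemann r' t Ht) as (HRet & HImt & HRer & HImr).
    split; [|split; [|split]].
    + now exists (Re (F' r' t)).
    + exact HRer.
    + now rewrite Ropp_involutive.
    + apply continuity_2d_pt_opp, (F'_continuous r' t Ht).
  - apply (continuous_minus (fun r => Im (F r a)) (fun r => Im (F r b)));
      now apply continuous_Im_strip.
Qed.

Lemma is_RInt_Im_rectangle r0 r1 :
  is_RInt (fun r => Re (F r b) - Re (F r a)) r0 r1
    (RInt (fun t => Im (F r1 t)) a b - RInt (fun t => Im (F r0 t)) a b).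
Proof.
  apply (is_RInt_derive (fun r => RInt (fun t => Im (F r t)) a b)); intros r _.
  - replace (Re (F r b) - Re (F r a)) with (- Re (F r a) - - Re (F r b)) by ring.
    apply (is_derive_RInt_strip lo hi a b r _ (fun r t => - Re (F r t)) (fun r t => Re (F' r t)));
      auto; intros r' t Ht.
    destruct (F_cauchy_riemann r' t Ht) as (HRet & HImt & HRer & HImr).
    split; [|split; [|split]].
    + now exists (Im (F' r' t)).
    + exact HImr.
    + now apply (is_derive_opp (fun t => Re (F r' t))).
    + apply (F'_continuous r' t Ht).
  - apply (continuous_minus (fun r => Re (F r b)) (fun r => Re (F r a)));
      now apply continuous_Re_strip.
Qed.

End CauchyRectangle.

(** * The function e^{iλw} / cos w *)

(* Values at w = t + i r of e^{iλw}, cos w and sin w. *)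
Definition expi (lam r t : R) : C :=
  (exp (- lam * r) * cos (lam * t), exp (- lam * r) * sin (lam * t)).
Definition ccos (r t : R) : C := (cos t * cosh r, - (sin t * sinh r)).
Definition csin (r t : R) : C := (sin t * cosh r, cos t * sinh r).
Definition expi_div_cos (lam r t : R) : C := (expi lam r t / ccos r t)%C.
Definition expi_div_cos' (lam r t : R) : C :=
  (expi_div_cos lam r t * (Ci * lam + csin r t / ccos r t))%C.

Lemma ccos_neq_0 r t : - (PI / 2) < t < PI / 2 -> ccos r t <> 0%C.
Proof.
  intros Ht E; apply (f_equal Re) in E; simpl in E.
  generalize (cos_gt_0 t ltac:(lra) ltac:(lra)) (cosh_pos r); nra.
Qed.

Lemma Re_Im_sqr_neq_0 (z : C) : z <> 0%C -> Re z ^ 2 + Im z ^ 2 <> 0.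
Proof. intro Hz; rewrite <- Cmod2_alt; apply pow_nonzero; intro H; apply Hz, Cmod_eq_0, H. Qed.

Lemma expi_div_cos_cauchy_riemann lam r t :
  - (PI / 2) < t < PI / 2 -> cauchy_riemann_at (expi_div_cos lam) (expi_div_cos' lam) r t.
Proof.
  intro Ht; apply (ccos_neq_0 r), Re_Im_sqr_neq_0 in Ht; revert Ht.
  (* The Cauchy-Riemann equations of the building blocks hold as polynomial identities,
     so [field] needs no trigonometric identity. *)
  unfold cauchy_riemann_at, expi_div_cos', expi_div_cos, expi, ccos, csin, Re, Im; cbn.
  intro Hnz.
  split; [|split; [|split]]; auto_derive; try tauto; field; contradict Hnz; lra.
Qed.

Lemma expi_div_cos'_continuous lam r t : - (PI / 2) < t < PI / 2 ->
  continuity_2d_pt (fun r t => Re (expi_div_cos' lam r t)) r t /\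
  continuity_2d_pt (fun r t => Im (expi_div_cos' lam r t)) r t.
Proof.
  intro Ht; apply (ccos_neq_0 r), Re_Im_sqr_neq_0 in Ht; revert Ht.
  unfold expi_div_cos', expi_div_cos, expi, ccos, csin, Re, Im; cbn.
  intro Hnz; split; continuity_2d; contradict Hnz; lra.
Qed.

Lemma Cmod_expi lam r t : Cmod (expi lam r t) = exp (- lam * r).
Proof.
  unfold Cmod, expi; simpl.
  generalize (exp_pos (- lam * r)) (sin2_cos2 (lam * t)); unfold Rsqr; intros.
  apply sqrt_lem_1; nra.
Qed.

Lemma Cmod_ccos_sqr r t : Cmod (ccos r t) ^ 2 = cos t ^ 2 + sinh r ^ 2.
Proof.
  rewrite Cmod2_alt; simpl.
  generalize (sin2_cos2 t) (cosh_sqr r); unfold Rsqr; intros; nra.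
Qed.

Lemma Cmod_expi_div_cos lam r t :
  ccos r t <> 0%C -> Cmod (expi_div_cos lam r t) = exp (- lam * r) / Cmod (ccos r t).
Proof. intro H0; unfold expi_div_cos; rewrite Cmod_div by exact H0; now rewrite Cmod_expi. Qed.

Lemma expi_div_cos_real_axis lam t : cos t <> 0 ->
  Re (expi_div_cos lam 0 t) = cos (lam * t) / cos t /\
  Im (expi_div_cos lam 0 t) = sin (lam * t) / cos t.
Proof.
  intro H0; unfold expi_div_cos, expi, ccos; cbn.
  rewrite cosh_0, sinh_0, Rmult_0_r, exp_0.
  split; field; lra.
Qed.

Lemma expi_div_cos_imag_axis lam r :
  Re (expi_div_cos lam r 0) = exp (- lam * r) / cosh r /\ Im (expi_div_cos lam r 0) = 0.
Proof.
  unfold expi_div_cos, expi, ccos; cbn.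
  rewrite cos_0, sin_0, Rmult_0_r, cos_0, sin_0.
  generalize (cosh_pos r) (cosh_sqr r); intros.
  split; field; nra.
Qed.

Lemma expi_div_cos_top_bound lam h t c s : c ^ 2 + s ^ 2 = 1 -> 0 < h ->
  c * Re (expi_div_cos lam h t) + s * Im (expi_div_cos lam h t) <= exp (- lam * h) / sinh h.
Proof.
  intros Hcs Hh.
  assert (Hsinh : 0 < sinh h) by (rewrite <- sinh_0; now apply sinh_lt).
  assert (Hmod : sinh h <= Cmod (ccos h t)).
  { apply Rsqr_incr_0_var; [|apply Cmod_ge_0].
    rewrite !Rsqr_pow2, Cmod_ccos_sqr; generalize (pow2_ge_0 (cos t)); lra. }
  eapply Rle_trans; [now apply unit_dot_le_Cmod |].
  rewrite Cmod_expi_div_cos by (apply Cmod_gt_0; lra).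
  apply Rmult_le_compat_l; [apply Rlt_le, exp_pos | now apply Rinv_le_contravar].
Qed.

Lemma expi_div_cos_side_bound lam r y c s : c ^ 2 + s ^ 2 = 1 -> 0 < y < PI / 2 ->
  c * Im (expi_div_cos lam r y) - s * Re (expi_div_cos lam r y)
  + s * (Re (expi_div_cos lam r 0) - exp (- lam * r)) <= exp (- lam * r) / cos y.
Proof.
  intros Hcs Hy.
  assert (He : 0 < exp (- lam * r)) by apply exp_pos.
  assert (Hcos : 0 < cos y <= 1) by (split; [apply cos_gt_0 | apply COS_bound]; lra).
  assert (Hccos : ccos r y <> 0%C) by (apply ccos_neq_0; lra).
  assert (Hinv : / Cmod (ccos r y) <= / cos y - 1 + / cosh r).
  { apply inv_le_inv_sub_1_add_inv; auto using cosh_ge_1.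
    - now apply Cmod_gt_0.
    - rewrite Cmod_ccos_sqr, cosh_sqr; ring. }
  assert (Hright : c * Im (expi_div_cos lam r y) - s * Re (expi_div_cos lam r y)
                   <= exp (- lam * r) * (/ cos y - 1 + / cosh r)).
  { replace (c * Im _ - s * Re _)
      with (- s * Re (expi_div_cos lam r y) + c * Im (expi_div_cos lam r y)) by ring.
    eapply Rle_trans; [apply unit_dot_le_Cmod; lra |].
    rewrite Cmod_expi_div_cos by exact Hccos.
    now apply Rmult_le_compat_l; [lra |]. }
  assert (Hsech : 0 < / cosh r <= 1).
  { split; [apply Rinv_0_lt_compat, cosh_pos |].
    rewrite <- Rinv_1; apply Rinv_le_contravar; [lra | apply cosh_ge_1]. }
  assert (Hs : -1 <= s <= 1) by (split; nra).
  assert (0 <= (1 + s) * (exp (- lam * r) * (1 - / cosh r)))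
    by (apply Rmult_le_pos; [|apply Rmult_le_pos]; lra).
  rewrite (proj1 (expi_div_cos_imag_axis lam r)).
  unfold Rdiv in *; lra.
Qed.

Lemma is_RInt_exp_decay lam h : is_RInt (fun r => lam * exp (- lam * r)) 0 h (1 - exp (- lam * h)).
Proof.
  replace (1 - exp (- lam * h)) with (- exp (- lam * h) - - exp (- lam * 0))
    by (rewrite Rmult_0_r, exp_0; ring).
  apply (is_RInt_derive (fun r => - exp (- lam * r))); intros r _.
  - auto_derive; [trivial | ring].
  - apply (ex_derive_continuous (V := R_NormedModule)); auto_derive; trivial.
Qed.

Definition segment_Re (lam r y : R) : R := RInt (fun t => Re (expi_div_cos lam r t)) 0 y.
Definition segment_Im (lam r y : R) : R := RInt (fun t => Im (expi_div_cos lam r t)) 0 y.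

Lemma segment_top_bound lam y h c s : 0 < y < PI / 2 -> 0 < h -> c ^ 2 + s ^ 2 = 1 ->
  c * segment_Re lam h y + s * segment_Im lam h y <= y * (exp (- lam * h) / sinh h).
Proof.
  intros Hy Hh Hcs.
  assert (H0 : - (PI / 2) < 0 < PI / 2) by lra.
  assert (Hy' : - (PI / 2) < y < PI / 2) by lra.
  pose proof (RInt_correct _ _ _
    (ex_RInt_Re_strip _ _ _ _ (expi_div_cos_cauchy_riemann lam) _ _ H0 Hy' h)) as HRe.
  pose proof (RInt_correct _ _ _
    (ex_RInt_Im_strip _ _ _ _ (expi_div_cos_cauchy_riemann lam) _ _ H0 Hy' h)) as HIm.
  replace (y * _) with ((y - 0) * (exp (- lam * h) / sinh h)) by ring.
  apply (is_RInt_le (fun t => c * Re (expi_div_cos lam h t) + s * Im (expi_div_cos lam h t))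
                    (fun _ => exp (- lam * h) / sinh h) 0 y); [lra | | | ].
  - exact (is_RInt_plus _ _ _ _ _ _ (is_RInt_scal _ _ _ c _ HRe) (is_RInt_scal _ _ _ s _ HIm)).
  - exact (is_RInt_const 0 y _).
  - intros t _; now apply expi_div_cos_top_bound.
Qed.

(* [1 - exp (- lam * h)] is λ ∫_0^h e^{-λr} dr, the part of [-i] absorbed by the vertical
   sides. *)
Lemma segment_sides_bound lam y h c s :
  0 <= lam -> 0 < y < PI / 2 -> 0 < h -> c ^ 2 + s ^ 2 = 1 ->
  - / cos y * (1 - exp (- lam * h))
  <= c * (lam * (segment_Re lam h y - segment_Re lam 0 y))
     + s * (lam * (segment_Im lam h y - segment_Im lam 0 y) + (1 - exp (- lam * h))).
Proof.
  intros Hlam Hy Hh Hcs.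
  set (F := expi_div_cos lam).
  assert (H0 : - (PI / 2) < 0 < PI / 2) by lra.
  assert (Hy' : - (PI / 2) < y < PI / 2) by lra.
  pose proof (is_RInt_Re_rectangle _ _ _ _ (expi_div_cos_cauchy_riemann lam)
                (expi_div_cos'_continuous lam) 0 y H0 Hy' 0 h) as HRe.
  pose proof (is_RInt_Im_rectangle _ _ _ _ (expi_div_cos_cauchy_riemann lam)
                (expi_div_cos'_continuous lam) 0 y H0 Hy' 0 h) as HIm.
  apply (is_RInt_le (fun r => - / cos y * (lam * exp (- lam * r)))
    (fun r => c * (lam * (Im (F r 0) - Im (F r y)))
              + s * (lam * (Re (F r y) - Re (F r 0)) + lam * exp (- lam * r))) 0 h); [lra | | | ].
  - exact (is_RInt_scal _ _ _ _ _ (is_RInt_exp_decay lam h)).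
  - exact (is_RInt_plus _ _ _ _ _ _ (is_RInt_scal _ _ _ c _ (is_RInt_scal _ _ _ lam _ HRe))
             (is_RInt_scal _ _ _ s _ (is_RInt_plus _ _ _ _ _ _ (is_RInt_scal _ _ _ lam _ HIm)
                                        (is_RInt_exp_decay lam h)))).
  - intros r _.
    pose proof (expi_div_cos_side_bound lam r y c s Hcs Hy) as Hside.
    assert (lam * (c * Im (F r y) - s * Re (F r y) + s * (Re (F r 0) - exp (- lam * r)))
            <= lam * (exp (- lam * r) / cos y)) by now apply Rmult_le_compat_l.
    assert (Haxis : Im (F r 0) = 0) by apply expi_div_cos_imag_axis.
    rewrite Haxis; unfold Rdiv in *; lra.
Qed.

Lemma unit_dot_lt_inv_cos lam y c s : 0 <= lam -> 0 < y < PI / 2 -> c ^ 2 + s ^ 2 = 1 ->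
  c * (lam * segment_Re lam 0 y) + s * (lam * segment_Im lam 0 y - 1) < / cos y.
Proof.
  intros Hlam Hy Hcs.
  assert (Hcos : 0 < cos y < 1).
  { assert (0 < sin y) by (apply sin_gt_0; lra).
    generalize (sin2_cos2 y) (COS_bound y); unfold Rsqr; intros.
    split; [apply cos_gt_0; lra | nra]. }
  set (d := / cos y - 1).
  assert (Hd : 0 < d).
  { assert (/ 1 < / cos y) by (apply Rinv_lt_contravar; nra).
    rewrite Rinv_1 in *; unfold d; lra. }
  destruct (exists_sinh_gt (lam * y / d)) as (h & Hh & Hsinh_h).
  pose proof (segment_top_bound lam y h c s Hy Hh Hcs) as Htop.
  pose proof (segment_sides_bound lam y h c s Hlam Hy Hh Hcs) as Hsides.
  set (e := exp (- lam * h)) in *.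
  assert (He : 0 < e) by apply exp_pos.
  assert (Hsinh : 0 < sinh h) by (rewrite <- sinh_0; now apply sinh_lt).
  assert (Hgap : lam * (y * (e / sinh h)) < e * d).
  { assert (Hly : lam * y < sinh h * d).
    { replace (lam * y) with (lam * y / d * d) by (field; lra).
      now apply Rmult_lt_compat_r. }
    replace (lam * (y * (e / sinh h))) with (e * (lam * y) / sinh h) by (field; lra).
    apply (Rmult_lt_reg_r (sinh h)); [exact Hsinh |].
    replace (e * (lam * y) / sinh h * sinh h) with (e * (lam * y)) by (field; lra).
    pose proof (Rmult_lt_compat_l e _ _ He Hly); lra. }
  assert (lam * (c * segment_Re lam h y + s * segment_Im lam h y) <= lam * (y * (e / sinh h)))
    by (apply Rmult_le_compat_l; assumption).
  assert (- (s * e) <= e) by nra.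
  unfold d in Hgap; lra.
Qed.

Lemma RInt_sin_mul_div_cos_opp lam y : 0 < y < PI / 2 ->
  RInt (fun t => sin (lam * t) / cos t) 0 y = - RInt (fun t => sin (- lam * t) / cos t) 0 y.
Proof.
  intro Hy.
  rewrite (RInt_ext (fun t => sin (lam * t) / cos t) (fun t => - (sin (- lam * t) / cos t)))
    by (intros t _; unfold Rdiv;
        now rewrite Ropp_mult_distr_l_reverse, sin_neg, Ropp_mult_distr_l_reverse, Ropp_involutive).
  apply (RInt_opp (V := R_CompleteNormedModule)).
  apply (ex_RInt_continuous (V := R_CompleteNormedModule)); intros t Ht.
  rewrite Rmin_left, Rmax_right in Ht by lra.
  apply (ex_derive_continuous (V := R_NormedModule)); auto_derive.
  apply Rgt_not_eq, cos_gt_0; lra.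
Qed.

Lemma integral_bound_nonneg lam y : 0 <= lam -> 0 < y < PI / 2 ->
  (lam * RInt (fun t => cos (lam * t) / cos t) 0 y) ^ 2
  + (lam * RInt (fun t => sin (lam * t) / cos t) 0 y - 1) ^ 2 < 1 / (cos y) ^ 2.
Proof.
  intros Hlam Hy.
  assert (Hcos : forall t, Rmin 0 y < t < Rmax 0 y -> cos t <> 0).
  { intros t Ht; rewrite Rmin_left, Rmax_right in Ht by lra.
    apply Rgt_not_eq, cos_gt_0; lra. }
  rewrite (RInt_ext _ (fun t => Re (expi_div_cos lam 0 t)))
    by (intros t Ht; symmetry; now apply expi_div_cos_real_axis, Hcos).
  rewrite (RInt_ext (fun t => sin (lam * t) / cos t) (fun t => Im (expi_div_cos lam 0 t)))
    by (intros t Ht; symmetry; now apply expi_div_cos_real_axis, Hcos).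
  assert (Hcos_y : 0 < cos y) by (apply cos_gt_0; lra).
  replace (1 / cos y ^ 2) with ((/ cos y) ^ 2) by (field; lra).
  apply sum_sqr_lt_of_unit_dot_lt; [now apply Rinv_0_lt_compat |].
  intros c s Hcs; now apply unit_dot_lt_inv_cos.
Qed.

Theorem theorem2 (lam y : R) (hy0 : 0 < y) (hy1 : y < PI / 2) :
  (lam * RInt (fun t => cos (lam * t) / cos t) 0 y) ^ 2
  + (lam * RInt (fun t => sin (lam * t) / cos t) 0 y - 1) ^ 2
  < 1 / (cos y) ^ 2.
Proof.
  destruct (Rle_or_lt 0 lam) as [Hlam | Hlam]; [now apply integral_bound_nonneg |].
  rewrite (RInt_ext (fun t => cos (lam * t) / cos t) (fun t => cos (- lam * t) / cos t))
    by (intros t _; now rewrite Ropp_mult_distr_l_reverse, cos_neg).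
  rewrite RInt_sin_mul_div_cos_opp by lra.
  set (A := RInt (fun t => cos (- lam * t) / cos t) 0 y).
  set (B := RInt (fun t => sin (- lam * t) / cos t) 0 y).
  replace ((lam * A) ^ 2 + (lam * - B - 1) ^ 2) with ((- lam * A) ^ 2 + (- lam * B - 1) ^ 2)
    by ring.
  apply integral_bound_nonneg; lra.
Qed.
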